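(* Let $k=p^\ell$ with $p$ a prime and $\ell>0$. For every $L\in\mathcal L_k$, the subgraph of $\mathcal F_k$ induced on $\phi_k^{-1}(L)$ is connected.
   Context: The vertex set $V$ consists of all reduced fractions $p/q$ with $p,q\in\mathbb Z$, $\gcd(p,q)=1$, together with $1/0$; here $p/q$ and $(-p)/(-q)$ denote the same vertex. For vertices define $d(p/q,a/b)=|pb-qa|$. The graph $\mathcal F_k$ has vertex set $V$, with an edge between $p/q$ and $a/b$ exactly when $d(p/q,a/b)=k$. An element $(a,b)\in(\mathbb Z/k\mathbb Z)^2$ is admissible if for $\lambda\in\mathbb Z/k\mathbb Z$, $(\lambda a,\lambda b)=0$ implies $\lambda=0$; $\mathcal L_k$ is the set of admissible elements modulo $v\sim\lambda v$ for units $\lambda\in(\mathbb Z/k\mathbb Z)^*$; $\phi_k:V\to\mathcal L_k$ sends $p/q$ to the class of $(p\bmod k,q\bmod k)$. *)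

From HB Require Import structures.
From mathcomp Require Import all_boot all_order all_algebra.
Set Implicit Arguments. Unset Strict Implicit. Unset Printing Implicit Defensive.
Import Order.TTheory GRing.Theory Num.Theory.
Local Open Scope ring_scope.

(* A vertex p/q is represented by a pair (p, q) of integers with gcd(p,q) = 1;
   (p, q) and (-p, -q) represent the same vertex. *)
Definition is_vertex (v : int * int) : Prop := coprimez v.1 v.2.

Definition same_vertex (u v : int * int) : Prop :=
  u = v \/ u = (- v.1, - v.2).

Definition dF (u v : int * int) : int := `|u.1 * v.2 - u.2 * v.1|.

Definition edgeF (k : nat) (u v : int * int) : bool := dF u v == k%:Z.

Definition admissible (k : nat) (x : 'Z_k * 'Z_k) : Prop :=
  forall lam : 'Z_k, (lam * x.1, lam * x.2) = (0, 0) -> lam = 0.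

Definition phi_rep (k : nat) (v : int * int) : 'Z_k * 'Z_k :=
  (v.1%:~R, v.2%:~R).

(* phi_k(v) equals the class L of the admissible element x in L_k,
   i.e. phi_rep v = lam x for some unit lam of Z/kZ *)
Definition in_class (k : nat) (x : 'Z_k * 'Z_k) (v : int * int) : Prop :=
  exists2 lam : 'Z_k, lam \is a GRing.unit & phi_rep k v = (lam * x.1, lam * x.2).

Definition in_fiber (k : nat) (x : 'Z_k * 'Z_k) (v : int * int) : Prop :=
  is_vertex v /\ in_class x v.

Definition connected_in_fiber (k : nat) (x : 'Z_k * 'Z_k) (u w : int * int) : Prop :=
  exists s : seq (int * int),
    (forall y, y \in s -> in_fiber x y) /\ path (edgeF k) u s /\ same_vertex (last u s) w.
Arguments in_class k x v : clear implicits.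
Arguments in_fiber k x v : clear implicits.
Arguments connected_in_fiber k x u w : clear implicits.
Arguments admissible k x : clear implicits.

From mathcomp Require Import all_boot all_order all_algebra.
From mathcomp Require Import zify ring.

(* Fix u in the fiber and complete it to a basis (u, e) of Z^2 with
   det(u, e) = 1.  In the coordinates (det(v, e), det(u, v)) the fiber consists
   of the primitive vectors (a, K b) with a prime to p, and (a, K b), (c, K d)
   are adjacent iff a d - b c = +-1.  From (a, K b) with |b| > 1 we step to a
   neighbour (c, K d) with a d - b c = 1 and |d| < |b|: the two solutions with
   0 < |d| < |b| have c-values differing by a, so one of them is prime to p,
   hence a unit modulo K = p^l.  The descent stops at |b| <= 1, that is at
   +-u or at a neighbour of u. *)

Set Implicit Arguments.
Unset Strict Implicit.
Unset Printing Implicit Defensive.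
Import GRing.Theory Num.Theory.
Local Open Scope ring_scope.

Definition det (u v : int * int) : int := u.1 * v.2 - u.2 * v.1.

Definition lincomb (u e : int * int) (a b : int) : int * int :=
  (a * u.1 + b * e.1, a * u.2 + b * e.2).

Lemma edgeF_det k u v : edgeF k u v = (`|det u v| == k%:Z).
Proof. by []. Qed.

Lemma detNl u v : det (- u.1, - u.2) v = - det u v.
Proof. by rewrite /det /=; ring. Qed.

Lemma det_lincomb u e a b c d :
  det (lincomb u e a b) (lincomb u e c d) = (a * d - b * c) * det u e.
Proof. by rewrite /det /=; ring. Qed.

Lemma det_lincombl u e a b : det u (lincomb u e a b) = b * det u e.
Proof. by rewrite /det /=; ring. Qed.

Lemma det_lincombr u e a b : det (lincomb u e a b) e = a * det u e.
Proof. by rewrite /det /=; ring. Qed.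

Lemma lincomb_det u e v : det u e = 1 -> lincomb u e (det v e) (det u v) = v.
Proof.
move=> hue; case: v => v1 v2; rewrite /lincomb /=.
by congr (_, _); rewrite -[RHS]mulr1 -hue /det /=; ring.
Qed.

Lemma exists_det_eq1 u : is_vertex u -> exists e, det u e = 1.
Proof.
by move/coprimezP=> [[r s] /= hrs]; exists (- s, r); rewrite /det /= -hrs; ring.
Qed.

Lemma is_vertex_coord u e v :
  det u e = 1 -> is_vertex v <-> coprimez (det v e) (det u v).
Proof.
move=> hue; split => /coprimezP [[r s] /= hrs]; apply/coprimezP.
- exists (r * u.1 + s * u.2, r * e.1 + s * e.2) => /=.
  by rewrite -hrs -[RHS]mulr1 -hue /det; ring.
- exists (r * e.2 - s * u.2, s * u.1 - r * e.1) => /=.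
  by rewrite -hrs /det; ring.
Qed.

Lemma same_vertex_det_eq0 u e v :
  det u e = 1 -> is_vertex v -> det u v = 0 -> same_vertex u v.
Proof.
move=> hue /(is_vertex_coord _ hue) + det_uv.
rewrite det_uv coprimezE /= /coprime gcdn0 => /eqP a1.
rewrite -(lincomb_det v hue) det_uv.
have a_sign : det v e = 1 \/ det v e = -1 by lia.
by case: a_sign => ->; [left | right];
  case: u {hue det_uv} => u1 u2; rewrite /lincomb /=; congr (_, _); ring.
Qed.

Lemma bezout_descent (p a b : int) :
  coprimez a b -> (1 < `|b|)%N -> ~~ (p %| a)%Z ->
  exists c d, [/\ a * d - b * c = 1, (`|d| < `|b|)%N & ~~ (p %| c)%Z].
Proof.
wlog b_gt0 : b / 0 < b => [hwlog cop_ab b_gt1 p'_a|].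
  have [b_gt0|b_le0] := ltrP 0 b; first exact: hwlog.
  have [|||c [d [hcd d_lt_b p'_c]]] := hwlog (- b) _ _ _ p'_a.
  - lia.
  - by rewrite coprimezN.
  - by rewrite abszN.
  exists (- c), d; split; first by rewrite -hcd; ring.
  - by rewrite abszN in d_lt_b.
  - by rewrite rpredN.
move=> /coprimezP [[r s] /= hrs] b_gt1 p'_a.
pose d := (r %% b)%Z; pose c := - (s + (r %/ b)%Z * a).
have hcd : a * d - b * c = 1 by rewrite /d /c -hrs {3}(divz_eq r b); ring.
have d_ge0 : 0 <= d := modz_ge0 r (lt0r_neq0 b_gt0).
have d_lt_b : d < b by rewrite -[X in _ < X]gtr0_norm // ltz_mod // lt0r_neq0.
have d_neq0 : d != 0.
  apply/eqP => d0; move: hcd; rewrite d0 mulr0 sub0r -mulrN mulrC.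
  by move/intUnitRing.unitzPl; lia.
have [p_c|p'_c] := boolP (p %| c)%Z; last by exists c, d; split => //; lia.
exists (c - a), (d - b); split; [by rewrite -hcd; ring | lia |].
by apply: contra p'_a => p_ca; rewrite -(subKr c a) rpredB.
Qed.

Section ReductionModK.

Variable K : nat.
Hypothesis K_gt1 : (1 < K)%N.

Lemma Zp_intr_eq0 (z : int) : ((z%:~R : 'Z_K) == 0) = (K%:Z %| z)%Z.
Proof.
rewrite {1}[z]intEsign rmorphM rmorphXn rmorphN1 /=.
rewrite (mulrI_eq0 _ (@GRing.lreg_sign _ _)).
by rewrite dvdzE -val_eqE /= val_Zp_nat // -dvdn_eq0.
Qed.

Lemma Zp_intr_unit (z : int) : ((z%:~R : 'Z_K) \is a GRing.unit) = coprime K `|z|.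
Proof.
rewrite {1}[z]intEsign rmorphM rmorphXn rmorphN1 /= unitrMr ?unitZpE //.
by rewrite unitrX // unitrN1.
Qed.

Lemma intr_det u v :
  (det u v)%:~R = (phi_rep K u).1 * (phi_rep K v).2 - (phi_rep K u).2 * (phi_rep K v).1.
Proof. by rewrite /det rmorphB !rmorphM. Qed.

Lemma in_class_coord x u e v : in_class K x u -> det u e = 1 ->
  in_class K x v <-> (K%:Z %| det u v)%Z /\ coprime K `|det v e|.
Proof.
move=> [lu lu_unit phi_u] hue; split.
- move=> [lv lv_unit phi_v]; rewrite -Zp_intr_eq0 -Zp_intr_unit.
  have det_ve : (det v e)%:~R * lu = lv * (det u e)%:~R :> 'Z_K.
    by rewrite !intr_det phi_u phi_v /=; ring.
  rewrite intr_det phi_u phi_v /=; split; first by apply/eqP; ring.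
  by rewrite -(unitrMl _ lu_unit) det_ve hue mulr1.
- move=> [/dvdzP [b det_uv] cop_ve].
  rewrite -(lincomb_det v hue) det_uv; set a := det v e in cop_ve *; clearbody a.
  exists (a%:~R * lu); first by rewrite unitrMr // Zp_intr_unit.
  have K0 : (K%:~R : 'Z_K) = 0 := pchar_Zp K_gt1.
  rewrite /phi_rep /= !rmorphD !rmorphM /= K0 !mulr0 !mul0r !addr0.
  by move: phi_u => [-> ->]; rewrite !mulrA.
Qed.

End ReductionModK.

Lemma connected_in_fiber_same k x u v :
  same_vertex u v -> connected_in_fiber k x u v.
Proof. by exists [::]. Qed.

Lemma connected_in_fiber_rcons k x u v v' :
  connected_in_fiber k x u v -> in_fiber k x v' -> edgeF k v v' ->
  connected_in_fiber k x u v'.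
Proof.
move=> [s [s_fiber [u_s last_s]]] v'_fiber vv'.
exists (rcons s v'); split; last split; last by rewrite last_rcons; left.
- by move=> y; rewrite mem_rcons inE => /predU1P [->|/s_fiber].
- rewrite rcons_path u_s; case: last_s => -> //.
  by rewrite !edgeF_det detNl normrN.
Qed.

Section PrimePower.

Variables (p l : nat).
Hypotheses (p_prime : prime p) (l_gt0 : (0 < l)%N).
Local Notation K := (p ^ l)%N.

Lemma prime_power_gt1 : (1 < K)%N.
Proof. by rewrite -(expn0 p) ltn_exp2l // prime_gt1. Qed.

Lemma coprime_prime_power (z : int) : coprime K `|z| = ~~ (p%:Z %| z)%Z.
Proof. by rewrite coprime_pexpl // prime_coprime // dvdzE. Qed.

Variables (x : 'Z_K * 'Z_K) (u e : int * int).
Hypotheses (u_class : in_class K x u) (det_ue : det u e = 1).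

Lemma in_fiber_coord v : in_fiber K x v <->
  [/\ coprimez (det v e) (det u v), (K%:Z %| det u v)%Z & ~~ (p%:Z %| det v e)%Z].
Proof.
rewrite /in_fiber (is_vertex_coord _ det_ue).
rewrite (in_class_coord prime_power_gt1 _ u_class det_ue) coprime_prime_power.
by split=> [[? []]|[]].
Qed.

Lemma fiber_descent v b : in_fiber K x v -> det u v = K%:Z * b -> (1 < `|b|)%N ->
  exists v' d, [/\ in_fiber K x v', edgeF K v' v, det u v' = K%:Z * d & (`|d| < `|b|)%N].
Proof.
move=> /in_fiber_coord [cop_v _ p'_a] det_uv b_gt1.
rewrite det_uv coprimezMr in cop_v; case/andP: cop_v => _ cop_ab.
have [c [d [hcd d_lt_b p'_c]]] := bezout_descent cop_ab b_gt1 p'_a.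
exists (lincomb u e c (K%:Z * d)), d.
rewrite det_lincombl det_ue mulr1; split => //.
- apply/in_fiber_coord; rewrite det_lincombl det_lincombr det_ue !mulr1.
  split; [|exact: dvdz_mulr|by []].
  rewrite coprimezMr coprimezE /= coprime_sym coprime_prime_power p'_c /=.
  by apply/coprimezP; exists (- b, det v e) => /=; rewrite -hcd; ring.
- rewrite edgeF_det -(lincomb_det v det_ue) det_lincomb det_uv det_ue mulr1.
  have -> : c * (K%:Z * b) - K%:Z * d * det v e = - (K%:Z * (det v e * d - b * c)).
    by ring.
  by rewrite hcd mulr1 normrN.
Qed.

Lemma connected_in_fiber_from v : in_fiber K x v -> connected_in_fiber K x u v.
Proof.
move=> v_fiber; have [_ /dvdzP [b det_uv] _] := (in_fiber_coord v).1 v_fiber.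
rewrite mulrC in det_uv.
have [n] := ubnP `|b|; elim: n => // n IH in v b v_fiber det_uv *; rewrite ltnS => b_le.
have [b_lt1|b_gt1|b1] := ltngtP `|b| 1.
- apply/connected_in_fiber_same/(same_vertex_det_eq0 det_ue v_fiber.1).
  by move: b_lt1; rewrite ltnS leqn0 absz_eq0 det_uv => /eqP ->; rewrite mulr0.
- have [v' [d [v'_fiber vv' det_uv' d_lt_b]]] := fiber_descent v_fiber det_uv b_gt1.
  apply: connected_in_fiber_rcons (IH _ _ v'_fiber det_uv' _) v_fiber vv'.
  exact: leq_trans d_lt_b b_le.
- apply: connected_in_fiber_rcons v_fiber _.
    by apply: connected_in_fiber_same; left.
  have b_norm : `|b| = 1 :> int by lia.
  by rewrite edgeF_det det_uv normrM b_norm mulr1.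
Qed.

End PrimePower.

Theorem proposition4p2 (p l : nat) (hp : prime p) (hl : (0 < l)%N)
  (x : 'Z_(p ^ l) * 'Z_(p ^ l)) (hx : admissible (p ^ l) x) (u w : int * int) :
  in_fiber (p ^ l) x u -> in_fiber (p ^ l) x w -> connected_in_fiber (p ^ l) x u w.
Proof.
move=> [u_vertex u_class]; have [e det_ue] := exists_det_eq1 u_vertex.
exact: (connected_in_fiber_from hp hl u_class det_ue).
Qed.
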